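(* Let $G=(V,E)$ be a graph and $\mathbb{F}$ a field. Suppose there exist a proper coloring $c:V\to[m]$ of $G$ and vectors $u_1,\dots,u_m\in\mathbb{F}^t$ such that for every $v\in V$ the vectors $\{u_{c(v')}: v'\in\{v\}\cup N(v)\}$ (indexed by the colors appearing in the closed neighborhood of $v$) are linearly independent over $\mathbb{F}$. Then $\mathrm{minrk}_{\mathbb{F}}(\overline{G})\le t$.
   Context: $\overline{G}$ denotes the complement of $G$, and $N(v)$ the neighborhood of $v$. For a graph $H$ on vertex set $[n]$, a matrix $M\in\mathbb{F}^{n\times n}$ represents $H$ if $M_{i,i}\ne0$ for all $i$ and $M_{i,j}=0$ for all distinct non-adjacent $i,j$. The minrank $\mathrm{minrk}_{\mathbb{F}}(H)$ is the minimum rank over $\mathbb{F}$ of a matrix representing $H$. *)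

From HB Require Import structures.
From mathcomp Require Import all_boot all_order all_algebra.
From mathcomp Require Import boolp.
Set Implicit Arguments. Unset Strict Implicit. Unset Printing Implicit Defensive.
Import Order.TTheory GRing.Theory Num.Theory.
Local Open Scope ring_scope.

(* A (simple) graph on vertex set [n] = 'I_n is an adjacency relation
   (assumed symmetric and irreflexive where relevant). *)

Definition compl_graph n (e : rel 'I_n) : rel 'I_n :=
  fun i j => (i != j) && ~~ e i j.

Definition closed_nbhd n (e : rel 'I_n) (v : 'I_n) : {set 'I_n} :=
  [set w | (w == v) || e v w].

Definition represents (F : fieldType) n (H : rel 'I_n) (M : 'M[F]_n) : Prop :=
  (forall i, M i i != 0) /\ (forall i j, i != j -> ~~ H i j -> M i j = 0).

Lemma minrk_ex (F : fieldType) n (H : rel 'I_n) :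
  exists r : nat, `[< exists M : 'M[F]_n, represents H M /\ (\rank M = r)%N >].
Proof.
exists n; apply/asboolP; exists 1%:M; split; last exact: mxrank1.
split=> [i|i j ij _]; rewrite mxE ?eqxx ?oner_neq0 //.
by rewrite (negbTE ij).
Qed.

Definition minrk (F : fieldType) n (H : rel 'I_n) : nat :=
  ex_minn (minrk_ex F H).

(* For each vertex v, the vectors attached to the colours of its closed
   neighbourhood are independent, so some linear functional y_v takes the value
   1 on u_{c(v)} and vanishes on u_{c(w)} for every neighbour w (whose colour
   differs from c(v) since c is proper).  The matrix M_{ij} = y_j(u_{c(i)}) then
   represents the complement of G, and it factors through F^t. *)
From mathcomp Require Import all_boot all_order all_algebra.
From mathcomp Require Import boolp.
Set Implicit Arguments. Unset Strict Implicit. Unset Printing Implicit Defensive.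
Import GRing.Theory.
Local Open Scope ring_scope.

Lemma minrk_le_rank (F : fieldType) n (H : rel 'I_n) (M : 'M[F]_n) :
  represents H M -> (minrk F H <= \rank M)%N.
Proof.
move=> repM; rewrite /minrk; case: ex_minnP => r _; apply.
by apply/asboolP; exists M.
Qed.

Lemma mxrank_pairing_le (F : fieldType) n t (x : 'I_n -> 'rV[F]_t)
    (y : 'I_n -> 'cV[F]_t) :
  (\rank (\matrix_(i, j) (x i *m y j) ord0 ord0) <= t)%N.
Proof.
have -> : \matrix_(i, j) (x i *m y j) ord0 ord0
        = (\matrix_i x i) *m (\matrix_(k, j) y j k ord0).
  by apply/matrixP => i j; rewrite !mxE; apply: eq_bigr => k _; rewrite !mxE.
exact: leq_trans (mxrankM_maxl _ _) (rank_leq_col _).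
Qed.

Lemma free_dual_functional (F : fieldType) t (X : seq 'rV[F]_t) i :
  free X -> (i < size X)%N ->
  exists y : 'cV[F]_t, forall j, (j < size X)%N -> X`_j *m y = (i == j)%:R.
Proof.
move=> freeX ltiX; pose T := in_tuple X.
exists (\col_k coord T (Ordinal ltiX) (delta_mx 0 k)) => j ltjX.
have coord_mul x : x *m \col_k coord T (Ordinal ltiX) (delta_mx 0 k)
                   = (coord T (Ordinal ltiX) x)%:M.
  apply/rowP => l; rewrite ord1 !mxE eqxx mulr1n {2}(row_sum_delta x).
  rewrite linear_sum; apply: eq_bigr => k _.
  by rewrite linearZ /= !mxE mulrC.
rewrite coord_mul (coord_free (X := T) (Ordinal ltjX)) // -val_eqE /= eq_sym.
by case: eqP => _; rewrite ?raddf0.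
Qed.

Lemma free_map_dual_functional (F : fieldType) t (I : eqType) (s : seq I)
    (f : I -> 'rV[F]_t) a :
  free [seq f b | b <- s] -> a \in s ->
  exists y : 'cV[F]_t,
    f a *m y = 1 /\ {in s, forall b, b != a -> f b *m y = 0}.
Proof.
move=> freefs sa.
have size_fs : size [seq f b | b <- s] = size s by rewrite size_map.
have nth_fs b : b \in s -> [seq f b | b <- s]`_(index b s) = f b.
  by move=> sb; rewrite (nth_map b) ?index_mem // nth_index.
have [|y yP] := free_dual_functional (i := index a s) freefs.
  by rewrite size_fs index_mem.
exists y; split=> [|b sb nba].
  by rewrite -nth_fs // yP ?size_fs ?index_mem // eqxx.
rewrite -nth_fs // yP ?size_fs ?index_mem //.
by case: eqP => // /esym/(index_inj a sb sa)/eqP; rewrite (negbTE nba).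
Qed.

Theorem mainTheorem9 (F : fieldType) (n m t : nat) (e : rel 'I_n)
  (e_sym : symmetric e) (e_irr : irreflexive e)
  (c : 'I_n -> 'I_m) (c_proper : forall x y, e x y -> c x != c y)
  (u : 'I_m -> 'rV[F]_t)
  (u_indep : forall v : 'I_n,
     free [seq u j | j <- enum (c @: closed_nbhd e v)]) :
  (minrk F (compl_graph e) <= t)%N.
Proof.
have colour_nbhd v w : (w == v) || e v w -> c w \in enum (c @: closed_nbhd e v).
  by move=> vw; rewrite mem_enum imset_f // inE.
have dual v : exists y : 'cV[F]_t,
    u (c v) *m y = 1 /\ forall w, e v w -> u (c w) *m y = 0.
  have [|y [yv yN]] := free_map_dual_functional (a := c v) (u_indep v).
    by apply: colour_nbhd; rewrite eqxx.
  exists y; split=> // w vw; apply: yN; last by rewrite eq_sym c_proper.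
  by apply: colour_nbhd; rewrite vw orbT.
have [y yP] := fin_all_exists dual.
apply: leq_trans (minrk_le_rank _) (mxrank_pairing_le (u \o c) y).
split=> [i | i j nij]; rewrite mxE /=.
  by rewrite (proj1 (yP i)) mxE eqxx oner_neq0.
rewrite /compl_graph nij negbK e_sym => eji.
by rewrite (proj2 (yP j) i eji) mxE.
Qed.
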